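(* Let $x_i,x_j:[0,\infty)\to\mathbb{S}^2$ and $v_i,v_j:[0,\infty)\to\mathbb{R}^3$, with $v_i$ and $v_j$ uniformly bounded in time. For $k>0$ let $$f_k(t):=\|x_i(t)+x_j(t)\|\,\big\|R(x_j(t),x_i(t))v_j(t)-v_i(t)\big\|^k,$$ with $f_k(t):=0$ whenever $x_i(t)=-x_j(t)$. Then the conditions $\lim_{t\to\infty}f_k(t)=0$ are equivalent for all $k>0$ (i.e. if it holds for one $k>0$, it holds for every $k>0$).
   Context: $\mathbb{S}^2$ is the unit sphere in $\mathbb{R}^3$ and $\|\cdot\|$ the Euclidean norm. For column vectors $x_1,x_2\in\mathbb{S}^2$ with $x_1\ne-x_2$, $R(x_1,x_2)=I$ if $x_1=x_2$, and otherwise $$R(x_1,x_2)=\langle x_1,x_2\rangle I-x_1x_2^T+x_2x_1^T+(1-\langle x_1,x_2\rangle)\Big(\frac{x_1\times x_2}{\|x_1\times x_2\|}\Big)\Big(\frac{x_1\times x_2}{\|x_1\times x_2\|}\Big)^T.$$ *)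

From HB Require Import structures.
From mathcomp Require Import all_boot all_order all_algebra.
From mathcomp Require Import all_classical all_reals all_analysis.
Set Implicit Arguments. Unset Strict Implicit. Unset Printing Implicit Defensive.
Import Order.TTheory GRing.Theory Num.Theory.
Local Open Scope ring_scope.

Section Defs.
Variable R : realType.

Definition dot3 (x y : 'cV[R]_3) : R := (x^T *m y) 0 0.

Definition norm3 (x : 'cV[R]_3) : R := Num.sqrt (dot3 x x).

Definition on_sphere (x : 'cV[R]_3) : Prop := norm3 x = 1.

Definition cross3 (x y : 'cV[R]_3) : 'cV[R]_3 :=
  \col_(i < 3)
    (if i == 0 :> nat then x 1 0 * y 2%:R 0 - x 2%:R 0 * y 1 0
     else if i == 1 :> nat then x 2%:R 0 * y 0 0 - x 0 0 * y 2%:R 0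
     else x 0 0 * y 1 0 - x 1 0 * y 0 0).

(* The matrix R(x1,x2) of the paper (only meaningful for x1 <> -x2). *)
Definition Rmat (x1 x2 : 'cV[R]_3) : 'M[R]_3 :=
  if x1 == x2 then 1%:M
  else
    let n := (norm3 (cross3 x1 x2))^-1 *: cross3 x1 x2 in
    (dot3 x1 x2)%:M - x1 *m x2^T + x2 *m x1^T + (1 - dot3 x1 x2) *: (n *m n^T).

Definition fk (k : R) (xi xj vi vj : R -> 'cV[R]_3) (t : R) : R :=
  if xi t == - xj t then 0
  else norm3 (xi t + xj t) * powR (norm3 (Rmat (xj t) (xi t) *m vj t - vi t)) k.

End Defs.

From HB Require Import structures.
From mathcomp Require Import all_boot all_order all_algebra.
From mathcomp Require Import all_classical all_reals all_analysis.
From mathcomp Require Import ring lra.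
Set Implicit Arguments. Unset Strict Implicit. Unset Printing Implicit Defensive.
Import Order.TTheory GRing.Theory Num.Theory.
Import numFieldNormedType.Exports.
Local Open Scope classical_set_scope.
Local Open Scope ring_scope.

(* Write a = ||x_i + x_j|| and b = ||R(x_j,x_i) v_j - v_i||, so that f_k = a b^k
   (also where x_i = -x_j, since then a = 0).  On the sphere a <= 2, and b is
   bounded because R(x_j,x_i) has bounded operator norm.  For k1 <= k2,
   a b^k2 <= B^(k2-k1) a b^k1; for k2 < k1, with p = k2/k1,
   a b^k2 = a^(1-p) (a b^k1)^p <= 2^(1-p) (a b^k1)^p.  Either way
   f_k2 <= C f_k1^q with q > 0, and f_k2 -> 0 by squeezing. *)

Section Euclidean3.
Variable R : realType.
Implicit Types (a : R) (x y v : 'cV[R]_3).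

Lemma dot3E x y : dot3 x y = x 0 0 * y 0 0 + x 1 0 * y 1 0 + x 2%:R 0 * y 2%:R 0.
Proof.
rewrite /dot3 !mxE !big_ord_recl big_ord0 !mxE addr0 addrA.
have -> : lift ord0 ord0 = 1 :> 'I_3 by apply/val_inj.
by have -> : lift ord0 (lift ord0 ord0) = 2%:R :> 'I_3 by apply/val_inj.
Qed.

Lemma dot3_ge0 x : 0 <= dot3 x x.
Proof. by rewrite dot3E -!expr2 !addr_ge0 ?sqr_ge0. Qed.

Lemma norm3_ge0 x : 0 <= norm3 x.
Proof. exact: sqrtr_ge0. Qed.

Lemma sqr_norm3 x : norm3 x ^+ 2 = dot3 x x.
Proof. by rewrite sqr_sqrtr ?dot3_ge0. Qed.

Lemma norm3Z a x : norm3 (a *: x) = `|a| * norm3 x.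
Proof.
rewrite /norm3.
have -> : dot3 (a *: x) (a *: x) = a ^+ 2 * dot3 x x by rewrite !dot3E !mxE; ring.
by rewrite sqrtrM ?sqr_ge0 // sqrtr_sqr.
Qed.

Lemma norm3N x : norm3 (- x) = norm3 x.
Proof. by rewrite -scaleN1r norm3Z normrN1 mul1r. Qed.

Lemma norm30 : norm3 (0 : 'cV[R]_3) = 0.
Proof. by rewrite -(scale0r 0) norm3Z normr0 mul0r. Qed.

Lemma dot3_lagrange x y :
  dot3 x x * dot3 y y - dot3 x y ^+ 2 = dot3 (cross3 x y) (cross3 x y).
Proof. by rewrite !dot3E !mxE /=; ring. Qed.

Lemma dot3_cauchy_schwarz x y : `|dot3 x y| <= norm3 x * norm3 y.
Proof.
rewrite -sqrtrM ?dot3_ge0 // -sqrtr_sqr ler_sqrt ?mulr_ge0 ?dot3_ge0 //.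
by rewrite -subr_ge0 dot3_lagrange dot3_ge0.
Qed.

Lemma norm3D_le x y : norm3 (x + y) <= norm3 x + norm3 y.
Proof.
have expand : dot3 (x + y) (x + y) = dot3 x x + 2 * dot3 x y + dot3 y y.
  by rewrite !dot3E !mxE; ring.
rewrite -[leRHS]ger0_norm ?addr_ge0 ?norm3_ge0 // -sqrtr_sqr ler_sqrt ?sqr_ge0 //.
rewrite expand sqrrD !sqr_norm3 lerD2r lerD2l -[leRHS]mulr_natl ler_pM2l //.
exact: le_trans (ler_norm _) (dot3_cauchy_schwarz x y).
Qed.

Lemma norm3B_le x y : norm3 (x - y) <= norm3 x + norm3 y.
Proof. by rewrite -(norm3N y) norm3D_le. Qed.

Lemma mul_dyad_mx x y v : x *m y^T *m v = dot3 y v *: x.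
Proof. by rewrite -mulmxA [y^T *m v]mx11_scalar mul_mx_scalar. Qed.

Lemma norm3_mul_dyad_le x y v : norm3 (x *m y^T *m v) <= norm3 x * norm3 y * norm3 v.
Proof.
rewrite mul_dyad_mx norm3Z mulrC -mulrA.
exact/ler_wpM2l/dot3_cauchy_schwarz/norm3_ge0.
Qed.

Lemma norm3_normalize_le x : norm3 ((norm3 x)^-1 *: x) <= 1.
Proof.
rewrite norm3Z normfV ger0_norm ?norm3_ge0 //.
have [->|nx0] := eqVneq (norm3 x) 0; first by rewrite invr0 mul0r.
by rewrite mulVf.
Qed.

(* Crude (R(x1,x2) is a rotation), but any bound will do. *)
Lemma norm3_Rmat_mul_le x1 x2 v : on_sphere x1 -> on_sphere x2 ->
  norm3 (Rmat x1 x2 *m v) <= 5 * norm3 v.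
Proof.
move=> x1S x2S; have v0 := norm3_ge0 v.
rewrite /Rmat; case: ifP => _; first by rewrite mul1mx; lra.
set c := dot3 x1 x2; set n := _ *: cross3 x1 x2.
have c1 : `|c| <= 1 by rewrite -[1]mulr1 -{1}x1S -x2S dot3_cauchy_schwarz.
have n1 : norm3 n <= 1 by exact: norm3_normalize_le.
rewrite !mulmxDl mulNmx -scalemxAl mul_scalar_mx.
have dyad_le y z : on_sphere y -> on_sphere z -> norm3 (y *m z^T *m v) <= norm3 v.
  by move=> yS zS; have := norm3_mul_dyad_le y z v; rewrite yS zS !mul1r.
have nn_le : norm3 (n *m n^T *m v) <= norm3 v.
  apply: le_trans (norm3_mul_dyad_le n n v) _; rewrite -[leRHS]mul1r.
  by apply: ler_wpM2r => //; rewrite -[1]mulr1 ler_pM ?norm3_ge0.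
have c2 : `|1 - c| <= 2 by apply: le_trans (ler_normB _ _) _; rewrite normr1; lra.
apply: le_trans (norm3D_le _ _) _; rewrite norm3Z.
apply: le_trans (lerD (norm3D_le _ _) (lexx _)) _.
apply: le_trans (lerD (lerD (norm3D_le _ _) (lexx _)) (lexx _)) _.
rewrite norm3Z norm3N.
have := dyad_le _ _ x1S x2S; have := dyad_le _ _ x2S x1S.
have := normr_ge0 c; have := normr_ge0 (1 - c); have := norm3_ge0 (n *m n^T *m v).
nra.
Qed.

Lemma norm3_sphereD_le x y : on_sphere x -> on_sphere y -> norm3 (x + y) <= 2.
Proof. by move=> xS yS; have := norm3D_le x y; rewrite xS yS. Qed.

Lemma norm3_Rmat_mulB_le x1 x2 v w Mv Mw : on_sphere x1 -> on_sphere x2 ->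
  norm3 v <= Mv -> norm3 w <= Mw -> norm3 (Rmat x1 x2 *m v - w) <= 5 * Mv + Mw.
Proof.
move=> x1S x2S vM wM; apply: le_trans (norm3B_le _ _) _.
have := norm3_Rmat_mul_le v x1S x2S; have := norm3_ge0 v; lra.
Qed.

End Euclidean3.

Section PowerExchange.
Variable R : realType.
Implicit Types a b : R.

Lemma mul_powR_le_ge a b B k1 k2 : 0 <= a -> 0 <= b <= B -> 0 < k1 <= k2 ->
  a * b `^ k2 <= B `^ (k2 - k1) * (a * b `^ k1).
Proof.
move=> a0 /andP[b0 bB] /andP[k10 k12].
have -> : b `^ k2 = b `^ (k2 - k1) * b `^ k1.
  rewrite -powRD ?subrK //; apply/implyP => /eqP k20; lra.
rewrite mulrCA; apply: ler_wpM2r; first by rewrite mulr_ge0 ?powR_ge0.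
by apply: ge0_ler_powR; rewrite ?nnegrE ?subr_ge0 //; lra.
Qed.

Lemma mul_powR_le_le a b A k1 k2 : 0 <= a <= A -> 0 <= b -> 0 < k2 <= k1 ->
  a * b `^ k2 <= A `^ (1 - k2 / k1) * (a * b `^ k1) `^ (k2 / k1).
Proof.
move=> /andP[a0 aA] b0 /andP[k20 k21]; set p := k2 / k1.
have k10 : 0 < k1 by lra.
have p1 : p <= 1 by rewrite /p ler_pdivrMr // mul1r.
have -> : (a * b `^ k1) `^ p = a `^ p * b `^ k2.
  by rewrite powRM ?powR_ge0 // -powRrM /p [k1 * _]mulrC divfK ?gt_eqF.
have {1}-> : a = a `^ (1 - p) * a `^ p.
  by rewrite -powRD ?subrK ?powRr1 //; apply/implyP => /eqP; lra.
rewrite -mulrA; apply: ler_wpM2r; first by rewrite mulr_ge0 ?powR_ge0.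
by apply: ge0_ler_powR; rewrite ?nnegrE ?subr_ge0 //; lra.
Qed.

Lemma mul_powR_exponent_le A B k1 k2 : 0 < k1 -> 0 < k2 ->
  exists C q, 0 < q /\ forall a b, 0 <= a <= A -> 0 <= b <= B ->
    a * b `^ k2 <= C * (a * b `^ k1) `^ q.
Proof.
move=> k10 k20; have [k12|k21] := lerP k1 k2.
  exists (B `^ (k2 - k1)), 1; split=> // a b /andP[a0 _] bB.
  by rewrite powRr1 ?mulr_ge0 ?powR_ge0 // mul_powR_le_ge // k10.
exists (A `^ (1 - k2 / k1)), (k2 / k1); split=> [|a b aA /andP[b0 _]].
  exact: divr_gt0.
by rewrite mul_powR_le_le // k20 ltW.
Qed.

Lemma cvg0_powR {T} {F : set_system T} {FF : Filter F} (f : T -> R) q :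
  0 < q -> (\forall x \near F, 0 <= f x) -> f @ F --> 0 ->
  f x `^ q @[x --> F] --> 0.
Proof.
move=> q0 f_ge0 /cvgr0Pnorm_le f0; apply/cvgr0Pnorm_le => e e0.
have e_root : (e `^ q^-1) `^ q = e by rewrite -powRrM mulVf ?gt_eqF ?powRr1 ?ltW.
near=> x; rewrite ger0_norm ?powR_ge0 // -[leRHS]e_root.
have fx0 : 0 <= f x by near: x.
apply: (ge0_ler_powR (ltW q0)); rewrite ?nnegrE ?powR_ge0 //.
by rewrite -[f x]ger0_norm //; near: x; apply: f0; exact: powR_gt0.
Unshelve. all: end_near.
Qed.

End PowerExchange.

Lemma fkE (R : realType) k (xi xj vi vj : R -> 'cV[R]_3) t :
  fk k xi xj vi vj t =
  norm3 (xi t + xj t) * norm3 (Rmat (xj t) (xi t) *m vj t - vi t) `^ k.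
Proof. by rewrite /fk; case: eqP => // ->; rewrite addNr norm30 mul0r. Qed.

Lemma fk_ge0 (R : realType) k (xi xj vi vj : R -> 'cV[R]_3) t :
  0 <= fk k xi xj vi vj t.
Proof. by rewrite fkE mulr_ge0 ?norm3_ge0 ?powR_ge0. Qed.

Theorem lemmaC1 (R : realType) (xi xj vi vj : R -> 'cV[R]_3)
  (hxi : forall t : R, 0 <= t -> on_sphere (xi t))
  (hxj : forall t : R, 0 <= t -> on_sphere (xj t))
  (hvi : exists M : R, forall t : R, 0 <= t -> norm3 (vi t) <= M)
  (hvj : exists M : R, forall t : R, 0 <= t -> norm3 (vj t) <= M)
  (k1 k2 : R) (hk1 : 0 < k1) (hk2 : 0 < k2) :
  (fk k1 xi xj vi vj t @[t --> +oo] --> 0) ->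
  (fk k2 xi xj vi vj t @[t --> +oo] --> 0).
Proof.
move=> fk1_0; case: hvi => Mi hMi; case: hvj => Mj hMj.
have [C [q [q0 fk_exchange]]] := mul_powR_exponent_le 2 (5 * Mj + Mi) hk1 hk2.
have fk2_squeezed : \forall t \near +oo,
    0 <= fk k2 xi xj vi vj t <= C * fk k1 xi xj vi vj t `^ q.
  near=> t; have t0 : 0 <= t by near: t; apply: nbhs_pinfty_ge; rewrite num_real.
  rewrite fk_ge0 !fkE /=; apply: fk_exchange.
    by rewrite norm3_ge0 (norm3_sphereD_le (hxi t t0) (hxj t t0)).
  by rewrite norm3_ge0 (norm3_Rmat_mulB_le (hxj t t0) (hxi t t0)) ?hMi ?hMj.
apply: (squeeze_cvgr fk2_squeezed (cvg_cst 0)).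
rewrite -(mulr0 C); apply: cvgMl_tmp; apply: cvg0_powR q0 _ fk1_0.
by near=> t; exact: fk_ge0.
Unshelve. all: end_near.
Qed.
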